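(* Fix $i\in I$. Let $a\in U_-[f_i^{-1}]^{\mathrm{pa}}$. If $\phi_{\lambda+\rho}(a)\in U_-$ for all $\lambda\in P_+$, then $a\in U_-^{\mathrm{pa}}$.
   Context: Let $[a_{ij}]_{i,j\in I}$ be a symmetrizable generalized Cartan matrix ($a_{ii}=2$, $a_{ij}\le0$ for $i\ne j$, $a_{ij}=0\iff a_{ji}=0$, $d_ia_{ij}=d_ja_{ji}$, $d_i\in\mathbb{Z}_{>0}$). $Q^\vee$ is a free $\mathbb{Z}$-module, $P=\mathrm{Hom}(Q^\vee,\mathbb{Z})$, $\alpha_i^\vee\in Q^\vee$ linearly independent, $\alpha_i\in P$ pairwise distinct and linearly independent with $\langle\alpha_i^\vee,\alpha_j\rangle=a_{ij}$, $\Lambda_i\in P$ with $\langle\alpha_i^\vee,\Lambda_j\rangle=\delta_{ij}$, $\rho=\sum_i\Lambda_i$, $P_+=\{\lambda:\langle\alpha_i^\vee,\lambda\rangle\ge0\ \forall i\}$. Kac–Moody case: $U_-=U(\mathfrak{n}_-)$, the $\mathbb{C}$-algebra generated by $f_i$ with Serre relations $\sum_{k=0}^{1-a_{ij}}(-1)^kf_i^{(1-a_{ij}-k)}f_jf_i^{(k)}=0$ ($i\ne j$), $f_i^{(k)}=f_i^k/k!$. $q$-difference case: $U_-=U_q(\mathfrak{n}_-)$ over $\mathbb{C}(q)$ with $f_i^{(k)}=f_i^k/[k]_{q_i}!$, $q_i=q^{d_i}$, $[a]_q=(q^a-q^{-a})/(q-q^{-1})$. $U_-[f_i^{-1}]$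 is the Ore localization of $U_-$ at the powers of the single $f_i$. $U_-[f_i^{-1}]^{\mathrm{pa}}$ is $U_-[f_i^{-1}][\beta\mid\beta\in Q^\vee]$ (polynomial ring in a basis of $Q^\vee$, central variables) in the Kac–Moody case and the central Laurent extension $U_-[f_i^{-1}][q^\beta\mid\beta\in Q^\vee]$, $q^\beta q^\gamma=q^{\beta+\gamma}$, in the $q$-case; $U_-^{\mathrm{pa}}$ is defined likewise over $U_-$. For $\lambda\in P$, $\phi_\lambda:U_-[f_i^{-1}]^{\mathrm{pa}}\to U_-[f_i^{-1}]$ is the algebra homomorphism fixing $U_-[f_i^{-1}]$ and sending $\beta\mapsto\langle\beta,\lambda\rangle$ (resp. $q^\beta\mapsto q^{\langle\beta,\lambda\rangle}$). *)

From HB Require Import structures.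
From mathcomp Require Import all_boot all_order all_algebra.
From mathcomp Require Import finmap fraction.
From mathcomp Require mpoly.
From mathcomp Require Import Rstruct.
From mathcomp Require Import complex.
Set Implicit Arguments. Unset Strict Implicit. Unset Printing Implicit Defensive.
Import Order.TTheory GRing.Theory Num.Theory.
Local Open Scope ring_scope.

Definition Cfield : fieldType := (Rdefinitions.R)[i].
Definition Cq : fieldType := {fraction {poly Cfield}}.
Definition qq : Cq := @FracField.tofrac _ ('X : {poly Cfield}).

Definition is_GCM (n : nat) (A : 'M[int]_n) : Prop :=
  [/\ forall i, A i i = 2,
      forall i j, i != j -> A i j <= 0 &
      forall i j, (A i j == 0) = (A j i == 0)].

Definition symmetrizer (n : nat) (A : 'M[int]_n) (d : 'I_n -> nat) : Prop :=
  (forall i, (0 < d i)%N) /\ (forall i j, (d i)%:Z * A i j = (d j)%:Z * A j i).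

(* Q^vee = Z^r (row vectors), P = Hom(Q^vee, Z) identified with Z^r via the
   dual basis, so that the pairing <beta, lambda> is the dot product.    *)
Definition pairing (r : nat) (x y : 'rV[int]_r) : int :=
  \sum_(k < r) x 0 k * y 0 k.

Definition lin_indep (n r : nat) (v : 'I_n -> 'rV[int]_r) : Prop :=
  forall c : 'I_n -> int, \sum_(i < n) c i *: v i = 0 -> forall i, c i = 0.

Definition realization (n r : nat) (A : 'M[int]_n)
    (av al Lam : 'I_n -> 'rV[int]_r) : Prop :=
  [/\ lin_indep av, lin_indep al, injective al,
      forall i j, pairing (av i) (al j) = A i j &
      forall i j, pairing (av i) (Lam j) = (i == j)%:Z].

Definition rho (n r : nat) (Lam : 'I_n -> 'rV[int]_r) : 'rV[int]_r :=
  \sum_(i < n) Lam i.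

Definition dominant (n r : nat) (av : 'I_n -> 'rV[int]_r) (lam : 'rV[int]_r)
  : Prop := forall i, 0 <= pairing (av i) lam.

Definition serre_rel (K : fieldType) (U : algType K) (n : nat)
    (A : 'M[int]_n) (fct : 'I_n -> nat -> K) (f : 'I_n -> U) : Prop :=
  forall i j, i != j ->
    let N := absz (1 - A i j) in
    let dp k := (fct i k)^-1 *: f i ^+ k in
    \sum_(k < N.+1) (-1) ^+ k *: (dp (N - k)%N * f j * dp k) = 0.

Definition alg_hom (K : fieldType) (U B : algType K) (h : U -> B) : Prop :=
  [/\ forall x y, h (x + y) = h x + h y,
      forall (c : K) x, h (c *: x) = c *: h x,
      forall x y, h (x * y) = h x * h y & h 1 = 1].

Definition presented_by_serre (K : fieldType) (U : algType K) (n : nat)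
    (A : 'M[int]_n) (fct : 'I_n -> nat -> K) (f : 'I_n -> U) : Prop :=
  serre_rel A fct f /\
  forall (B : algType K) (g : 'I_n -> B), serre_rel A fct g ->
    (exists h : U -> B, alg_hom h /\ forall i, h (f i) = g i) /\
    (forall h1 h2 : U -> B, alg_hom h1 -> alg_hom h2 ->
       (forall i, h1 (f i) = g i) -> (forall i, h2 (f i) = g i) -> h1 =1 h2).

Definition fct_KM (n : nat) (i : 'I_n) (k : nat) : Cfield := (k`!)%:R.

Definition qint (x : Cq) (a : nat) : Cq := (x ^+ a - x ^- a) / (x - x^-1).
Definition qfact (x : Cq) (k : nat) : Cq := \prod_(1 <= a < k.+1) qint x a.
Definition fct_q (n : nat) (d : 'I_n -> nat) (i : 'I_n) (k : nat) : Cq :=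
  qfact (qq ^+ d i) k.

(* (L, iota) is the Ore localization U[f_i^{-1}] of U at the powers of f_i,
   i.e. the (left) ring of fractions with respect to S = {f_i^N}:
   iota(f_i) is invertible, every element is iota(f_i)^{-N} iota(u),
   and ker iota = {u | f_i^N u = 0 for some N}. *)
Definition ore_localization_at (K : fieldType) (U L : algType K)
    (x : U) (iota : U -> L) : Prop :=
  [/\ alg_hom iota,
      exists y : L, y * iota x = 1 /\ iota x * y = 1,
      forall z : L, exists (N : nat) (u : U), iota x ^+ N * z = iota u &
      forall u : U, iota u = 0 -> exists N : nat, x ^+ N * u = 0].

Definition in_image (U L : Type) (iota : U -> L) (z : L) : Prop :=
  exists u : U, z = iota u.

(* Kac--Moody "pa": R[beta | beta in Q^vee] = polynomial ring over R in the
   standard basis e_1..e_r of Q^vee (central variables).  phi_lambda sends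
   e_k to <e_k, lambda> = lambda_k. *)
Definition phi_KM (L : algType Cfield) (r : nat) (lam : 'rV[int]_r)
    (a : mpoly.mpoly r L) : L :=
  mpoly.meval (fun k : 'I_r => (lam 0 k)%:~R) a.

(* q "pa": R[q^beta | beta in Q^vee] (group algebra of Q^vee over R with
   central q^beta); as an R-module its elements are the finitely supported
   functions Q^vee -> R (beta |-> coefficient of q^beta).
   phi_lambda sends q^beta to q^<beta,lambda>. *)
Definition pa_q (L : algType Cq) (r : nat) :=
  {fsfun 'rV[int]_r -> L with 0}.

Definition phi_q (L : algType Cq) (r : nat) (lam : 'rV[int]_r)
    (a : pa_q L r) : L :=
  \sum_(beta <- finsupp a) (qq ^ pairing beta lam) *: a beta.

From HB Require Import structures.
From mathcomp Require Import all_boot all_order all_algebra.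
From mathcomp Require Import finmap fraction.
From mathcomp Require mpoly.
From mathcomp Require Import Rstruct complex.
From mathcomp Require Import zify ring.
From Stdlib Require Import Classical.
Set Implicit Arguments. Unset Strict Implicit. Unset Printing Implicit Defensive.
Import Order.TTheory GRing.Theory Num.Theory.
Local Open Scope ring_scope.

(* Only the fact that the image of U_- in U_-[f_i^{-1}] is a subspace matters.
   Write a in terms of its coefficients a_t (t a monomial, resp. t in Q^vee); then
   phi_(lam+rho)(a) = sum_t g_t(lam) a_t, where g_t(lam) is the monomial t evaluated
   at lam + rho, resp. q^<t, lam + rho>.  The functions g_t are linearly independent
   on the dominant cone P_+: for monomials because a polynomial vanishing on
   P_+ + rho vanishes on whole lines y + N rho and hence everywhere, for q-powers
   because they are distinct characters of the monoid P_+.  Gaussian elimination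
   then expresses each a_t as a linear combination of finitely many
   phi_(lam+rho)(a), which lie in U_-. *)

Definition lsubspace (K : fieldType) (W : lmodType K) (V : W -> Prop) : Prop :=
  [/\ V 0, forall x y, V x -> V y -> V (x + y) & forall c x, V x -> V (c *: x)].

Section Subspace.
Variables (K : fieldType) (W : lmodType K) (V : W -> Prop).
Hypothesis HV : lsubspace V.

Lemma lsubspaceZ c x : V x -> V (c *: x).
Proof. by case: HV => _ _; apply. Qed.

Lemma lsubspaceB x y : V x -> V y -> V (x - y).
Proof. by case: HV => _ VD _ Vx Vy; rewrite -scaleN1r; apply/VD/lsubspaceZ. Qed.

Lemma lsubspace_sum (T : eqType) (s : seq T) (F : T -> W) :
  (forall t, t \in s -> V (F t)) -> V (\sum_(t <- s) F t).
Proof.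
case: HV => V0 VD _; elim: s => [|t s IH] Vs; first by rewrite big_nil.
rewrite big_cons; apply: VD; first by apply: Vs; rewrite inE eqxx.
by apply: IH => u us; apply: Vs; rewrite inE us orbT.
Qed.

End Subspace.

Lemma alg_hom_image_lsubspace (K : fieldType) (U L : algType K) (iota : U -> L) :
  alg_hom iota -> lsubspace (in_image iota).
Proof.
case=> iotaD iotaZ _ _; split.
- by exists 0; rewrite -(scale0r (0 : U)) iotaZ scale0r.
- by move=> _ _ [u ->] [v ->]; exists (u + v); rewrite iotaD.
- by move=> c _ [u ->]; exists (c *: u); rewrite iotaZ.
Qed.

Lemma alg_hom_zmod_morphism (K : fieldType) (U L : algType K) (iota : U -> L) :
  alg_hom iota -> zmod_morphism iota.
Proof. by case=> iotaD iotaZ _ _ x y; rewrite -scaleN1r iotaD iotaZ scaleN1r. Qed.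

Section LinearElimination.
Variables (K : fieldType) (W : lmodType K) (T : eqType) (X : Type) (P : X -> Prop).

Definition lin_indep_on (s : seq T) (g : T -> X -> K) : Prop :=
  forall c : T -> K, (forall x, P x -> \sum_(t <- s) c t * g t x = 0) ->
  forall t, t \in s -> c t = 0.

Lemma lin_indep_on_nonvanishing t0 s g :
  lin_indep_on (t0 :: s) g -> exists2 x0, P x0 & g t0 x0 != 0.
Proof.
move=> indep; apply: NNPP => no_x0.
have g0 x : P x -> g t0 x = 0.
  by move=> Px; apply: NNPP => gx; apply: no_x0; exists x => //; apply/eqP.
suff: (1 : K) = 0 by move/eqP; rewrite oner_eq0.
have := indep (fun t => (t == t0)%:R) _ t0 (mem_head _ _); rewrite eqxx; apply.
move=> x Px; rewrite big1 // => t _.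
by case: eqP => [->|_]; rewrite ?g0 ?mulr0 ?mul0r.
Qed.

Variables (t0 : T) (x0 : X) (g : T -> X -> K).

(* One step of Gaussian elimination: [g t0] is cancelled using the point [x0]. *)
Definition eliminate t x : K := g t0 x0 * g t x - g t x0 * g t0 x.

Lemma sum_eliminate (s : seq T) (a : T -> W) x :
  \sum_(t <- s) eliminate t x *: a t =
    g t0 x0 *: \sum_(t <- t0 :: s) g t x *: a t
    - g t0 x *: \sum_(t <- t0 :: s) g t x0 *: a t.
Proof.
rewrite !big_cons !scalerDr !scalerA (mulrC (g t0 x)).
rewrite opprD addrACA subrr add0r !scaler_sumr -sumrB.
by apply: eq_bigr => t _; rewrite !scalerA -scalerBl /eliminate (mulrC (g t0 x)).
Qed.

Lemma lin_indep_on_eliminate s :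
  g t0 x0 != 0 -> t0 \notin s -> lin_indep_on (t0 :: s) g -> lin_indep_on s eliminate.
Proof.
move=> gx0 t0s indep c c_indep t ts.
have t_neq t' : t' \in s -> (t' == t0) = false.
  by move=> t's; apply/negbTE; apply: contraNneq t0s => <-.
pose c' t := if t == t0 then - \sum_(u <- s) c u * g u x0 else c t * g t0 x0.
have := indep c' _ t; rewrite inE ts orbT /c' (t_neq t ts) => c't.
apply/eqP; rewrite -(mulIr_eq0 _ (mulIf gx0)) c't // => x Px.
rewrite big_cons /c' eqxx mulNr.
rewrite [X in _ + X](eq_big_seq (fun u => g t0 x0 * (c u * g u x))); last first.
  by move=> u us; rewrite t_neq // mulrAC mulrC.
have -> : (\sum_(u <- s) c u * g u x0) * g t0 x =
          g t0 x0 * \sum_(u <- s) c u * g u x - \sum_(u <- s) c u * eliminate u x.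
  rewrite mulr_suml mulr_sumr -sumrB.
  by apply: eq_bigr => u _; rewrite /eliminate; ring.
by rewrite c_indep // subr0 -mulr_sumr addNr.
Qed.

End LinearElimination.

Lemma lin_indep_coef_in_lsubspace (K : fieldType) (W : lmodType K) (V : W -> Prop)
    (T : eqType) (X : Type) (P : X -> Prop) (s : seq T) (g : T -> X -> K) (a : T -> W) :
  lsubspace V -> uniq s -> lin_indep_on P s g ->
  (forall x, P x -> V (\sum_(t <- s) g t x *: a t)) ->
  forall t, t \in s -> V (a t).
Proof.
move=> HV; elim: s g => [//|t0 s IH] g /= /andP[t0s us] indep Vsum.
have [x0 Px0 gx0] := lin_indep_on_nonvanishing indep.
have Vs : forall t, t \in s -> V (a t).
  apply: (IH (eliminate t0 x0 g) us (lin_indep_on_eliminate gx0 t0s indep)) => x Px.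
  by rewrite sum_eliminate; apply: lsubspaceB => //; apply: lsubspaceZ => //; apply: Vsum.
move=> t; rewrite inE => /orP[/eqP ->|]; last exact: Vs.
have -> : a t0 = (g t0 x0)^-1 *: (\sum_(t <- t0 :: s) g t x0 *: a t
                                  - \sum_(t <- s) g t x0 *: a t).
  by rewrite big_cons addrK scalerA mulVf // scale1r.
apply: lsubspaceZ => //; apply: lsubspaceB => //; first exact: Vsum.
by apply: lsubspace_sum => // u /Vs Vu; exact: lsubspaceZ.
Qed.

Lemma lin_indep_on_chars (K : fieldType) (T : eqType) (X : nmodType) (P : X -> Prop)
    (chi : T -> X -> K) (s : seq T) :
  P 0 -> (forall x y, P x -> P y -> P (x + y)) ->
  (forall t, chi t 0 = 1) -> (forall t x y, chi t (x + y) = chi t x * chi t y) ->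
  uniq s ->
  {in s &, forall t t', t != t' -> exists2 x, P x & chi t x != chi t' x} ->
  lin_indep_on P s chi.
Proof.
move=> P0 PD chi0 chiD; elim: s => [//|t0 s IH] /= /andP[t0s us] sep c c_indep.
have sep_s : {in s &, forall t t', t != t' -> exists2 x, P x & chi t x != chi t' x}.
  by move=> t t' ts t's; apply: sep; rewrite inE ?ts ?t's orbT.
have c_s : forall t, t \in s -> c t = 0.
  move=> t1 t1s; have t10 : t1 != t0 by apply: contraNneq t0s => <-.
  have [x0 Px0 chi_x0] := sep t1 t0 (mem_behead (s := t0 :: s) t1s) (mem_head _ _) t10.
  suff: c t1 * (chi t1 x0 - chi t0 x0) = 0.
    by move/eqP; rewrite mulf_eq0 subr_eq0 (negbTE chi_x0) orbF => /eqP.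
  (* shifting by [x0] and subtracting kills the [t0] term *)
  apply: (IH us sep_s (fun t => c t * (chi t x0 - chi t0 x0))) => // x Px.
  have shifted : \sum_(t <- s) c t * (chi t x0 - chi t0 x0) * chi t x =
      \sum_(t <- s) c t * chi t (x + x0) - chi t0 x0 * \sum_(t <- s) c t * chi t x.
    by rewrite mulr_sumr -sumrB; apply: eq_bigr => t _; rewrite chiD; ring.
  rewrite shifted; apply/eqP; rewrite subr_eq0; apply/eqP.
  apply: (addrI (c t0 * chi t0 (x + x0))).
  have := c_indep (x + x0) (PD _ _ Px Px0); rewrite big_cons => ->.
  have := c_indep x Px; rewrite big_cons => c_x.
  have -> : chi t0 x0 * \sum_(t <- s) c t * chi t x = - (chi t0 x0 * (c t0 * chi t0 x)).
    by apply/eqP; rewrite -addr_eq0 -mulrDr addrC c_x mulr0.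
  by rewrite chiD; ring.
move=> t; rewrite inE => /orP[/eqP ->|]; last exact: c_s.
have := c_indep 0 P0; rewrite big_cons chi0 mulr1 big_seq big1 ?addr0 //.
by move=> u /c_s ->; rewrite mul0r.
Qed.

Section Pairing.
Variable r : nat.
Implicit Types x y z : 'rV[int]_r.

Lemma pairing0r x : pairing x 0 = 0.
Proof. by rewrite /pairing big1 // => k _; rewrite mxE mulr0. Qed.

Lemma pairingDr x y z : pairing x (y + z) = pairing x y + pairing x z.
Proof. by rewrite /pairing -big_split; apply: eq_bigr => k _; rewrite mxE mulrDr. Qed.

Lemma pairingZr x y c : pairing x (c *: y) = c * pairing x y.
Proof. by rewrite /pairing mulr_sumr; apply: eq_bigr => k _; rewrite mxE mulrCA. Qed.

Lemma pairingBl x y z : pairing (y - z) x = pairing y x - pairing z x.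
Proof. by rewrite /pairing -sumrB; apply: eq_bigr => k _; rewrite !mxE mulrBl. Qed.

Lemma pairing_sumr x n (F : 'I_n -> 'rV[int]_r) :
  pairing x (\sum_(i < n) F i) = \sum_(i < n) pairing x (F i).
Proof. exact: (big_morph _ (pairingDr x) (pairing0r x)). Qed.

End Pairing.

Section Dominance.
Variables (n r : nat) (A : 'M[int]_n) (av al Lam : 'I_n -> 'rV[int]_r).
Hypothesis Hre : realization A av al Lam.

Lemma pairing_rho i : pairing (av i) (rho Lam) = 1.
Proof.
case: Hre => _ _ _ _ avLam; rewrite /rho pairing_sumr (bigD1 i) //= avLam eqxx.
by rewrite big1 ?addr0 // => j /negbTE; rewrite avLam eq_sym => ->.
Qed.

Lemma dominant0 : dominant av 0.
Proof. by move=> i; rewrite pairing0r. Qed.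

Lemma dominantD x y : dominant av x -> dominant av y -> dominant av (x + y).
Proof. by move=> dx dy i; rewrite pairingDr addr_ge0. Qed.

(* Enough copies of [rho] to make [y] dominant, as [<alpha_i^vee, rho> = 1]. *)
Definition rho_shift (y : 'rV[int]_r) : nat := \sum_(i < n) `|pairing (av i) y|%N.

Lemma dominant_shift y k : dominant av (y + (rho_shift y + k)%:Z *: rho Lam).
Proof.
move=> i; rewrite pairingDr pairingZr pairing_rho mulr1.
have : (`|pairing (av i) y| <= rho_shift y)%N by rewrite /rho_shift (bigD1 i) ?leq_addr.
lia.
Qed.

Lemma dominant_separates (g : 'rV[int]_r) :
  g != 0 -> exists2 lam, dominant av lam & pairing g lam != 0.
Proof.
move=> g0; have [j gj] : exists j, g 0 j != 0.
  apply: NNPP => no_j; move/eqP: g0; apply; apply/rowP => j; rewrite mxE.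
  by apply: NNPP => gj; apply: no_j; exists j; apply/eqP.
pose e : 'rV[int]_r := delta_mx 0 j.
have ge : pairing g e = g 0 j.
  rewrite /pairing (bigD1 j) //= mxE !eqxx mulr1 big1 ?addr0 // => k /negbTE kj.
  by rewrite mxE kj mulr0.
pose lam := (rho_shift e)%:Z *: rho Lam.
have dom_lam : dominant av lam by move=> i; rewrite pairingZr pairing_rho mulr1.
have [g_lam|g_lam] := eqVneq (pairing g lam) 0; last by exists lam.
exists (e + lam); first by have := dominant_shift e 0; rewrite addn0.
by rewrite pairingDr g_lam addr0 ge.
Qed.

End Dominance.

Lemma qq_neq0 : qq != 0.
Proof. by rewrite /qq tofrac_eq0 polyX_eq0. Qed.

Lemma qq_expz_eq1 (k : int) : qq ^ k = 1 -> k = 0.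
Proof.
have qqXn_eq1 m : qq ^+ m = 1 -> m = 0%N.
  rewrite /qq -rmorphXn -(rmorph1 (@tofrac _)) => /eqP; rewrite tofrac_eq => /eqP E.
  by have := size_polyXn Cfield m; rewrite E size_poly1 => -[].
case: k => m /=; first by move/qqXn_eq1 ->.
by rewrite NegzE -exprnN => /eqP; rewrite invr_eq1 => /eqP /qqXn_eq1.
Qed.

Lemma pa_q_coef_in_image n r (A : 'M[int]_n) (av al Lam : 'I_n -> 'rV[int]_r)
    (U L : algType Cq) (iota : U -> L) (a : pa_q L r) :
  realization A av al Lam -> alg_hom iota ->
  (forall lam, dominant av lam -> in_image iota (phi_q (lam + rho Lam) a)) ->
  forall beta, in_image iota (a beta).
Proof.
move=> Hre iotaH phiV beta; have HV := alg_hom_image_lsubspace iotaH.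
have [beta_a|beta_a] := boolP (beta \in finsupp a); last first.
  by rewrite fsfun_dflt //; case: HV.
pose chi (t lam : 'rV[int]_r) := qq ^ pairing t lam.
have chiD t x y : chi t (x + y) = chi t x * chi t y.
  by rewrite /chi pairingDr expfzDr ?qq_neq0.
have chi_sep : {in finsupp a &, forall t t', t != t' ->
                  exists2 lam, dominant av lam & chi t lam != chi t' lam}.
  move=> t t' _ _; rewrite -subr_eq0 => /(dominant_separates Hre)[lam dom_lam tt'].
  exists lam => //; apply: contra tt'; rewrite /chi => /eqP chi_eq; apply/eqP/qq_expz_eq1.
  by rewrite pairingBl expfzDr ?qq_neq0 // -invr_expz chi_eq mulfV ?expfz_neq0 ?qq_neq0.
have chi_indep : lin_indep_on (dominant av) (finsupp a) chi.
  apply: lin_indep_on_chars (dominant0 av) (@dominantD _ _ av) _ chiD (fset_uniq _) chi_sep.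
  by move=> t; rewrite /chi pairing0r expr0z.
(* the coefficient of [chi t] in [phi_(lam + rho)(a)] is [q^<t, rho> a t] *)
pose a' t := qq ^ pairing t (rho Lam) *: a t.
have a'V := lin_indep_coef_in_lsubspace (a := a') HV (fset_uniq _) chi_indep.
have -> : a beta = (qq ^ pairing beta (rho Lam))^-1 *: a' beta.
  by rewrite /a' scalerA mulVf ?expfz_neq0 ?qq_neq0 // scale1r.
apply: lsubspaceZ => //; apply: a'V beta_a => lam dom_lam.
rewrite (eq_bigr (fun t => qq ^ pairing t (lam + rho Lam) *: a t)); first exact: phiV.
by move=> t _; rewrite /chi /a' scalerA pairingDr expfzDr ?qq_neq0.
Qed.

Lemma poly_eq0_on_shifts (K : idomainType) (p : {poly K}) (z : K) :
  injective (fun k : nat => k%:R : K) -> (forall k : nat, p.[z + k%:R] = 0) -> p = 0.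
Proof.
move=> natr_inj p_shift; apply/eqP; apply: contraT => p0.
have := max_poly_roots p0 (rs := [seq z + k%:R | k <- iota 0 (size p)]).
rewrite size_map size_iota ltnn; apply.
  by apply/allP => _ /mapP[k _ ->]; rewrite /root p_shift.
by rewrite map_inj_uniq ?iota_uniq // => i j /addrI /natr_inj.
Qed.

Lemma Cfield_natr_inj : injective (fun k : nat => k%:R : Cfield).
Proof. by move=> i j /eqP; rewrite /Cfield eqr_nat => /eqP. Qed.

Lemma digits_inj (D r : nat) (f g : 'I_r -> nat) :
  (forall i, f i < D)%N -> (forall i, g i < D)%N ->
  (\sum_(i < r) f i * D ^ i = \sum_(i < r) g i * D ^ i)%N -> f =1 g.
Proof.
elim: r f g => [|r IH] f g f_lt g_lt; first by move=> _ [].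
have D_gt0 : (0 < D)%N := leq_ltn_trans (leq0n _) (f_lt ord0).
have sum_tail (h : 'I_r.+1 -> nat) :
    (\sum_(i < r) h (lift ord0 i) * D ^ bump 0 i
     = D * \sum_(i < r) h (lift ord0 i) * D ^ i)%N.
  by rewrite big_distrr; apply: eq_bigr => i _; rewrite /bump add1n expnS mulnCA.
rewrite !big_ord_recl /= !expn0 !muln1 !sum_tail ![(_ + D * _)%N]addnC.
rewrite ![(D * _)%N]mulnC => E.
have fg0 : f ord0 = g ord0.
  by move: (congr1 (modn^~ D) E); rewrite !modnMDl !modn_small.
have fg_tail := IH _ _ (fun i => f_lt (lift ord0 i)) (fun i => g_lt (lift ord0 i)).
move: (congr1 (divn^~ D) E); rewrite !divnMDl // !divn_small // !addn0 => /fg_tail.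
by move=> fgl i; case: (unliftP ord0 i) => [j ->|->].
Qed.

Module KacMoody.
Import mpoly.

Section Monomials.
Variable r : nat.

Definition mono_eval (m : 'X_{1..r}) (y : 'rV[int]_r) : Cfield :=
  \prod_(i < r) (y 0 i)%:~R ^+ m i.

Lemma phi_KM_expand (L : algType Cfield) lam (a : {mpoly L[r]}) :
  phi_KM lam a = \sum_(m <- msupp a) mono_eval m lam *: a@_m.
Proof.
rewrite /phi_KM mevalE; apply: eq_bigr => m _; rewrite -mulr_algr; congr (_ * _).
by rewrite -in_algE rmorph_prod; apply: eq_bigr => i _; rewrite rmorphXn rmorph_int.
Qed.

(* Kronecker substitution: at [y_i = N ^ (D ^ i)] distinct monomials with exponents
   below [D] become distinct powers of [N]. *)
Lemma lin_indep_monomials (s : seq 'X_{1..r}) :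
  uniq s -> lin_indep_on (fun _ => True) s mono_eval.
Proof.
move=> us c c_vanish m0 m0s.
pose D := (\sum_(m <- s) \sum_(i < r) m i).+1.
have m_lt m : m \in s -> forall i, (m i < D)%N.
  move=> ms i; rewrite ltnS (big_rem m ms) /=.
  by apply: leq_trans (leq_addr _ _); rewrite (bigD1 i) //= leq_addr.
pose e (m : 'X_{1..r}) := (\sum_(i < r) m i * D ^ i)%N.
pose q : {poly Cfield} := \sum_(m <- s) c m *: 'X^(e m).
have q0 : q = 0.
  apply: (@poly_eq0_on_shifts _ q 0 Cfield_natr_inj) => N; rewrite add0r.
  rewrite horner_sum -[RHS](c_vanish (\row_i (N ^ (D ^ i))%:Z)) //.
  apply: eq_bigr => m _; rewrite hornerZ hornerXn /mono_eval -prodrXr; congr (_ * _).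
  by apply: eq_bigr => i _; rewrite mxE -pmulrn natrX -exprM mulnC.
have := congr1 (fun p : {poly Cfield} => p`_(e m0)) q0.
rewrite coef0 coef_sum (bigD1_seq m0) //= coefZ coefXn eqxx mulr1 => <-.
rewrite big1_seq ?addr0 // => m /andP[mm0 ms]; rewrite coefZ coefXn.
suff /negbTE -> : e m0 != e m by rewrite mulr0.
apply: contra mm0 => /eqP E; apply/eqP/mnmP => i; apply/esym.
exact: (digits_inj (m_lt m0 m0s) (m_lt m ms) E).
Qed.

Variables (n : nat) (A : 'M[int]_n) (av al Lam : 'I_n -> 'rV[int]_r).
Hypothesis Hre : realization A av al Lam.

(* Along the line [k |-> y + (rho_shift y + k) rho] everything is dominant, so a
   polynomial vanishing on the shifted dominant cone vanishes on these lines. *)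
Lemma monomials_vanish_everywhere (s : seq 'X_{1..r}) (c : 'X_{1..r} -> Cfield) :
  (forall lam, dominant av lam -> \sum_(m <- s) c m * mono_eval m (lam + rho Lam) = 0) ->
  forall y, \sum_(m <- s) c m * mono_eval m y = 0.
Proof.
move=> c_vanish y.
pose p : {poly Cfield} := \sum_(m <- s) c m *: \prod_(i < r)
   ((y 0 i)%:~R%:P + (rho Lam 0 i)%:~R *: 'X) ^+ m i.
have p_eval x : p.[x] = \sum_(m <- s) c m *
    \prod_(i < r) ((y 0 i)%:~R + (rho Lam 0 i)%:~R * x) ^+ m i.
  rewrite horner_sum; apply: eq_bigr => m _; rewrite hornerZ horner_prod.
  congr (_ * _); apply: eq_bigr => i _.
  by rewrite horner_exp hornerD hornerC hornerZ hornerX.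
have p0 : p = 0.
  apply: (@poly_eq0_on_shifts _ p (rho_shift av y).+1%:R Cfield_natr_inj) => k.
  rewrite p_eval -[RHS](c_vanish _ (dominant_shift Hre y k)); apply: eq_bigr => m _.
  congr (_ * _); apply: eq_bigr => i _; congr (_ ^+ _).
  rewrite !mxE !intrD intrM -pmulrn mulrSr !natrD.
  move: ((y 0 i)%:~R) ((rho Lam 0 i)%:~R) ((rho_shift av y)%:R) (k%:R) => u v w z; ring.
rewrite -[RHS](horner0 0) -p0 p_eval; apply: eq_bigr => m _; congr (_ * _).
by apply: eq_bigr => i _; rewrite mulr0 addr0.
Qed.

Lemma lin_indep_shifted_monomials (s : seq 'X_{1..r}) :
  uniq s -> lin_indep_on (dominant av) s (fun m lam => mono_eval m (lam + rho Lam)).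
Proof.
move=> us c c_vanish; apply: (lin_indep_monomials us) => y _.
exact: monomials_vanish_everywhere.
Qed.

End Monomials.

Lemma map_mpoly_coef_in_image (r : nat) (U L : nzRingType) (f : U -> L) (a : {mpoly L[r]}) :
  zmod_morphism f -> (forall m, m \in msupp a -> in_image f a@_m) ->
  exists b : {mpoly U[r]}, a = map_mpoly f b.
Proof.
move=> fB coef_img.
pose fA : {additive U -> L} := HB.pack f (GRing.isZmodMorphism.Build U L f fB).
have f0 : f 0 = 0 := raddf0 fA.
have pre_ex m : exists u, f u == a@_m.
  have [/coef_img[u ->]|m_a] := boolP (m \in msupp a); first by exists u.
  by exists 0; rewrite f0 eq_sym mcoeff_eq0.
pose pre m := xchoose (pre_ex m).
exists (\sum_(m <- msupp a) pre m *: 'X_[m]).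
apply/mpolyP => m; rewrite (mcoeff_map_mpoly fA) /= raddf_sum /=.
under eq_bigr do rewrite mcoeffZ mcoeffX.
have [m_a|m_a] := boolP (m \in msupp a).
  rewrite (bigD1_seq m) ?msupp_uniq //= eqxx mulr1 big1_seq ?addr0.
    by apply/esym/eqP/(xchooseP (pre_ex m)).
  by move=> m' /andP[/negbTE -> _]; rewrite mulr0.
rewrite big1_seq ?f0; first by apply/eqP; rewrite mcoeff_eq0.
move=> m' /andP[_ m'_a]; rewrite (_ : m' == m = false) ?mulr0 //.
by apply: contraNF m_a => /eqP <-.
Qed.

Lemma pa_KM_in_map_mpoly n r (A : 'M[int]_n) (av al Lam : 'I_n -> 'rV[int]_r)
    (U L : algType Cfield) (iota : U -> L) (a : {mpoly L[r]}) :
  realization A av al Lam -> alg_hom iota ->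
  (forall lam, dominant av lam -> in_image iota (phi_KM (lam + rho Lam) a)) ->
  exists b : {mpoly U[r]}, a = map_mpoly iota b.
Proof.
move=> Hre iotaH phiV; apply: map_mpoly_coef_in_image (alg_hom_zmod_morphism iotaH) _.
apply: (lin_indep_coef_in_lsubspace (alg_hom_image_lsubspace iotaH) (msupp_uniq a)
          (lin_indep_shifted_monomials Hre (msupp_uniq a))) => lam dom_lam.
by rewrite -phi_KM_expand; apply: phiV.
Qed.

End KacMoody.

Theorem mainTheorem7 (n : nat) (A : 'M[int]_n) (d : 'I_n -> nat) (r : nat)
    (av al Lam : 'I_n -> 'rV[int]_r)
    (HA : is_GCM A) (Hd : symmetrizer A d) (Hre : realization A av al Lam)
    (i : 'I_n) :
  (* Kac--Moody case: U_- = U(n_-) over C *)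
  (forall (U : algType Cfield) (f : 'I_n -> U)
          (L : algType Cfield) (iota : U -> L),
     presented_by_serre A (@fct_KM n) f ->
     ore_localization_at (f i) iota ->
     forall a : mpoly.mpoly r L,
       (forall lam : 'rV[int]_r, dominant av lam ->
          in_image iota (phi_KM (lam + rho Lam) a)) ->
       exists b : mpoly.mpoly r U, a = mpoly.map_mpoly iota b)
  /\
  (* q-difference case: U_- = U_q(n_-) over C(q) *)
  (forall (U : algType Cq) (f : 'I_n -> U)
          (L : algType Cq) (iota : U -> L),
     presented_by_serre A (fct_q d) f ->
     ore_localization_at (f i) iota ->
     forall a : pa_q L r,
       (forall lam : 'rV[int]_r, dominant av lam ->
          in_image iota (phi_q (lam + rho Lam) a)) ->
       forall beta : 'rV[int]_r, in_image iota (a beta)).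
Proof.
split=> U f L iota _ [iotaH _ _ _] a phiV.
- exact: KacMoody.pa_KM_in_map_mpoly Hre iotaH phiV.
- exact: pa_q_coef_in_image Hre iotaH phiV.
Qed.
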